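(* Let $a^*\in\mathbb{R}$, $\epsilon\ge0$ with $|a^*|-\epsilon>1$, $m\in\mathbb{N}$, $R\ge0$, $N:=2^R$. Let $\delta_+:=(|a^*|+\epsilon)^m-|a^*|^m$, $\delta_-:=|a^*|^m-(|a^*|-\epsilon)^m$, $M:=N^m$, and $$\kappa:=\frac1M\Big(|a^*|^m+\max\{\tfrac M2,1\}\delta_++\max\{\tfrac M2-1,0\}\delta_-\Big).$$ Then $\kappa^2<1$ (i.e. $\bar\kappa<1$ in the lossless case $p=0$) if and only if $$\frac{\delta_++\delta_-}{2}<1\quad\text{and}\quad R>\max\Big\{\log_2(|a^*|+\epsilon),\ \frac1m\log_2\frac{|a^*|^m-\delta_-}{1-(\delta_++\delta_-)/2}\Big\}.$$
   Context: In particular, if $m$ is so large that $(\delta_++\delta_-)/2\ge1$, no data rate $R$ achieves $\kappa<1$. *)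

From Stdlib Require Import Reals.
Open Scope R_scope.

Definition log2 (x : R) : R := ln x / ln 2.

Definition delta_plus (a eps : R) (m : nat) : R := (Rabs a + eps) ^ m - Rabs a ^ m.
Definition delta_minus (a eps : R) (m : nat) : R := Rabs a ^ m - (Rabs a - eps) ^ m.

Definition Nrate (Rr : R) : R := Rpower 2 Rr.
Definition Mval (Rr : R) (m : nat) : R := (Nrate Rr) ^ m.

Definition kappa (a eps : R) (m : nat) (Rr : R) : R :=
  let M := Mval Rr m in
  / M * (Rabs a ^ m + Rmax (M / 2) 1 * delta_plus a eps m
                    + Rmax (M / 2 - 1) 0 * delta_minus a eps m).

(* Put x := |a|^m, P := (|a|+eps)^m and Q := (|a|-eps)^m, so that
   delta_+ + delta_- = P - Q, |a|^m - delta_- = Q and 1 < Q <= x <= P.  The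
   quantity M = (2^R)^m equals 2^(mR), hence M >= 1 when R >= 0.

   As a function of M, kappa is piecewise simple: it equals P/M when M < 2 and
   Q/M + (P-Q)/2 when M >= 2.  In both regimes kappa < 1 is equivalent to the
   three conditions (P-Q)/2 < 1, P < M and Q/(1-(P-Q)/2) < M; one direction is
   immediate and the other is a short linear estimate.  Since kappa >= 0,
   kappa^2 < 1 iff kappa < 1.  Finally, because M = 2^(mR) and log2 is
   increasing, R > log2(|a|+eps) iff P < M, and R > (1/m) log2 q iff q < M. *)

From Stdlib Require Import Reals Lra Lia.
Open Scope R_scope.

Lemma ln2_pos : 0 < ln 2.
Proof. rewrite <- ln_1. apply ln_increasing; lra. Qed.

Lemma Mval_Rpower (Rr : R) (m : nat) : Mval Rr m = Rpower 2 (INR m * Rr).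
Proof.
  unfold Mval, Nrate.
  rewrite <- Rpower_pow by (unfold Rpower; apply exp_pos).
  now rewrite Rpower_mult, Rmult_comm.
Qed.

Lemma Mval_ge_1 (Rr : R) (m : nat) : 0 <= Rr -> 1 <= Mval Rr m.
Proof.
  intros HR. rewrite Mval_Rpower, <- (Rpower_O 2) by lra.
  apply Rle_Rpower; [lra|]. apply Rmult_le_pos; [apply pos_INR | exact HR].
Qed.

Lemma lt_Rpower2_iff (q t : R) : 0 < q -> (q < Rpower 2 t <-> log2 q < t).
Proof.
  intros Hq. pose proof ln2_pos as Hl.
  assert (Hlog : log2 q < t <-> ln q < t * ln 2).
  { unfold log2, Rdiv. split; intros H.
    - apply Rmult_lt_reg_r with (/ ln 2); [now apply Rinv_0_lt_compat|].
      rewrite Rmult_assoc, Rinv_r; lra.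
    - apply Rmult_lt_reg_r with (ln 2); [exact Hl|].
      rewrite Rmult_assoc, Rinv_l; lra. }
  rewrite Hlog, <- (ln_Rpower 2 t). split; intros H.
  - now apply ln_increasing.
  - apply ln_lt_inv; [exact Hq | unfold Rpower; apply exp_pos | exact H].
Qed.

Lemma rate_threshold_iff (m : nat) (Rr q : R) : (1 <= m)%nat -> 0 < q ->
  (/ INR m * log2 q < Rr <-> q < Mval Rr m).
Proof.
  intros Hm Hq. assert (Hn : 0 < INR m) by (apply lt_0_INR; lia).
  rewrite Mval_Rpower, lt_Rpower2_iff by exact Hq. split; intros H.
  - apply Rmult_lt_compat_l with (r := INR m) in H; [|exact Hn].
    rewrite <- Rmult_assoc, Rinv_r in H; lra.
  - apply Rmult_lt_reg_l with (INR m); [exact Hn|].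
    rewrite <- Rmult_assoc, Rinv_r; lra.
Qed.

Lemma rate_threshold_log2_iff (m : nat) (Rr y : R) : (1 <= m)%nat -> 0 < y ->
  (log2 y < Rr <-> y ^ m < Mval Rr m).
Proof.
  intros Hm Hy. assert (Hn : 0 < INR m) by (apply lt_0_INR; lia).
  rewrite <- rate_threshold_iff by (auto; now apply pow_lt).
  unfold log2. rewrite ln_pow by exact Hy.
  replace (/ INR m * (INR m * ln y / ln 2)) with (ln y / ln 2)
    by (field; split; [pose proof ln2_pos|]; lra).
  reflexivity.
Qed.

Definition kappa_expr (x P Q M : R) : R :=
  / M * (x + Rmax (M / 2) 1 * (P - x) + Rmax (M / 2 - 1) 0 * (x - Q)).

Lemma kappa_kappa_expr (a eps : R) (m : nat) (Rr : R) :
  kappa a eps m Rr =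
  kappa_expr (Rabs a ^ m) ((Rabs a + eps) ^ m) ((Rabs a - eps) ^ m) (Mval Rr m).
Proof. reflexivity. Qed.

Lemma div_lt_iff (u d v : R) : 0 < d -> (u / d < v <-> u < v * d).
Proof.
  intros Hd. split; intros H.
  - apply Rmult_lt_compat_r with (r := d) in H; [|exact Hd].
    unfold Rdiv in H. rewrite Rmult_assoc, Rinv_l in H; lra.
  - apply Rmult_lt_reg_r with d; [exact Hd|].
    unfold Rdiv. rewrite Rmult_assoc, Rinv_l; lra.
Qed.

Lemma sq_lt_1_iff (k : R) : 0 <= k -> (k ^ 2 < 1 <-> k < 1).
Proof. intros Hk. split; intros H; nra. Qed.

Section KappaAlgebra.

Variables x P Q M : R.
Hypothesis HQ : 1 < Q.
Hypothesis HQx : Q <= x.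
Hypothesis HxP : x <= P.
Hypothesis HM : 1 <= M.

Lemma kappa_expr_nonneg : 0 <= kappa_expr x P Q M.
Proof.
  unfold kappa_expr.
  assert (H1 : 0 <= Rmax (M / 2) 1) by (eapply Rle_trans; [|apply Rmax_r]; lra).
  assert (H2 : 0 <= Rmax (M / 2 - 1) 0) by apply Rmax_r.
  apply Rmult_le_pos; [left; apply Rinv_0_lt_compat; lra|].
  assert (0 <= Rmax (M / 2) 1 * (P - x)) by (apply Rmult_le_pos; lra).
  assert (0 <= Rmax (M / 2 - 1) 0 * (x - Q)) by (apply Rmult_le_pos; lra).
  lra.
Qed.

Lemma kappa_expr_low_rate : M < 2 -> kappa_expr x P Q M = P / M.
Proof.
  intros H2. unfold kappa_expr.
  rewrite Rmax_right, Rmax_right by lra. field. lra.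
Qed.

Lemma kappa_expr_high_rate : 2 <= M -> kappa_expr x P Q M = Q / M + (P - Q) / 2.
Proof.
  intros H2. unfold kappa_expr.
  rewrite Rmax_left, Rmax_left by lra. field. lra.
Qed.

Lemma kappa_expr_lt_1_iff :
  kappa_expr x P Q M < 1 <->
  (P - Q) / 2 < 1 /\ P < M /\ Q / (1 - (P - Q) / 2) < M.
Proof.
  destruct (Rlt_le_dec M 2) as [Hlow | Hhigh].
  - rewrite kappa_expr_low_rate, (div_lt_iff P) by lra. split.
    + intros HPM. assert (Hs : (P - Q) / 2 < 1) by lra.
      rewrite (div_lt_iff Q) by lra.
      (* Q + M (P-Q)/2 = Q (1 - M/2) + P M/2 <= P < M *)
      assert (0 <= (2 - M) * (P - Q)) by (apply Rmult_le_pos; lra).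
      repeat split; nra.
    + intros [_ [HPM _]]. lra.
  - rewrite kappa_expr_high_rate by exact Hhigh. split.
    + intros Hk.
      assert (HQM : Q / M < 1 - (P - Q) / 2) by lra.
      rewrite (div_lt_iff Q) in HQM by lra.
      assert (Hs : (P - Q) / 2 < 1) by nra.
      rewrite (div_lt_iff Q) by lra.
      (* P = Q + (P-Q) < M (1 - s) + 2 s = M - s (M - 2) <= M *)
      assert (0 <= (P - Q) * (M - 2)) by (apply Rmult_le_pos; lra).
      repeat split; nra.
    + intros [Hs [_ HQM]].
      rewrite (div_lt_iff Q) in HQM by lra.
      assert (Q / M < 1 - (P - Q) / 2) by (rewrite (div_lt_iff Q); lra).
      lra.
Qed.

End KappaAlgebra.

Theorem mainTheorem10 (a eps : R) (m : nat) (Rr : R) :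
  0 <= eps -> Rabs a - eps > 1 -> (1 <= m)%nat -> 0 <= Rr ->
  (kappa a eps m Rr ^ 2 < 1 <->
   ((delta_plus a eps m + delta_minus a eps m) / 2 < 1 /\
    Rr > Rmax (log2 (Rabs a + eps))
              (/ INR m * log2 ((Rabs a ^ m - delta_minus a eps m)
                               / (1 - (delta_plus a eps m + delta_minus a eps m) / 2))))).
Proof.
  intros Heps Ha Hm HR.
  assert (HQ : 1 < (Rabs a - eps) ^ m) by (apply Rlt_pow_R1; [lra | lia]).
  assert (HQx : (Rabs a - eps) ^ m <= Rabs a ^ m) by (apply pow_incr; lra).
  assert (HxP : Rabs a ^ m <= (Rabs a + eps) ^ m) by (apply pow_incr; lra).
  pose proof (Mval_ge_1 Rr m HR) as HM.
  unfold delta_plus, delta_minus.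
  replace (Rabs a ^ m - (Rabs a ^ m - (Rabs a - eps) ^ m))
    with ((Rabs a - eps) ^ m) by ring.
  replace ((Rabs a + eps) ^ m - Rabs a ^ m + (Rabs a ^ m - (Rabs a - eps) ^ m))
    with ((Rabs a + eps) ^ m - (Rabs a - eps) ^ m) by ring.
  rewrite kappa_kappa_expr, sq_lt_1_iff, kappa_expr_lt_1_iff by auto using kappa_expr_nonneg.
  set (P := (Rabs a + eps) ^ m) in *; set (Q := (Rabs a - eps) ^ m) in *.
  assert (HP : 0 < Rabs a + eps) by lra.
  unfold Rgt. rewrite Rmax_Rlt, (rate_threshold_log2_iff m) by assumption. fold P. split.
  - intros [Hs [HPM HqM]]. split; [exact Hs|]. split; [exact HPM|].
    apply rate_threshold_iff; [exact Hm | apply Rdiv_lt_0_compat; lra | exact HqM].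
  - intros [Hs [HPM Hq]]. split; [exact Hs|]. split; [exact HPM|].
    apply rate_threshold_iff in Hq; [exact Hq | exact Hm | apply Rdiv_lt_0_compat; lra].
Qed.
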